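(* Let $S=\{R_0,\dots,R_d\}$ be a quasi-thin scheme and let $n$ be the number of triples $(u,v,w)\in\{0,\dots,d\}^3$ with $p_{uv}^w\neq 0$. Then $n=(d+1)^2+|\{(a,b):R_a,R_b\in S,\ |R_{a'}R_b|=2\}|$.
   Context: Let $X$ be a nonempty finite set. A scheme of class $d$ on $X$ is a partition $S=\{R_0,\dots,R_d\}$ of $X\times X$ into nonempty sets such that $R_0=\{(b,b):b\in X\}$; for each $c$ there is $c'$ with $R_{c'}=\{(f,e):(e,f)\in R_c\}$; and for all $i,j,k$ the intersection number $p_{ij}^k=|\{\ell\in X:(m,\ell)\in R_i,(\ell,n)\in R_j\}|$ does not depend on $(m,n)\in R_k$. The valency of $R_a$ is $k_a=p_{aa'}^0$; $S$ is quasi-thin if all $k_a\le 2$. The complex product is $R_aR_b=\{R_c\in S:p_{ab}^c>0\}$. *)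

From mathcomp Require Import all_boot.
Set Implicit Arguments. Unset Strict Implicit. Unset Printing Implicit Defensive.

(* A scheme of class d on a finite set X is encoded by the function
   R : X -> X -> 'I_d.+1 sending (x,y) to the index c with (x,y) \in R_c.
   This makes {R_0,...,R_d} automatically a partition of X * X into
   (possibly empty) classes; nonemptiness is required in [is_scheme]. *)

Section Scheme.
Variables (X : finType) (d : nat).
Implicit Types (R : X -> X -> 'I_d.+1) (a b c i j k : 'I_d.+1).

Definition pcount R i j (m n : X) : nat :=
  #|[set l : X | (R m l == i) && (R l n == j)]|.

Definition is_transpose R c c' : bool :=
  [forall x : X, forall y : X, (R y x == c') == (R x y == c)].

Definition is_scheme R : Prop :=
  [/\ (forall c, exists x : X, exists y : X, R x y = c),
      (forall x y : X, (R x y == ord0) = (x == y)),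
      (forall c, exists c', is_transpose R c c') &
      (forall i j k (m n m2 n2 : X), R m n = k -> R m2 n2 = k ->
          pcount R i j m n = pcount R i j m2 n2)].

(* intersection number p_{ij}^k, evaluated at some pair (m,n) \in R_k *)
Definition pnum R i j k : nat :=
  match [pick mn : X * X | R mn.1 mn.2 == k] with
  | Some mn => pcount R i j mn.1 mn.2
  | None => 0
  end.

(* the index c' (unique in a scheme) *)
Definition tr R c : 'I_d.+1 := odflt c [pick c' | is_transpose R c c'].

Definition valency R a : nat := pnum R a (tr R a) ord0.

Definition quasi_thin R : Prop := forall a, valency R a <= 2.

Definition cprod R a b : {set 'I_d.+1} := [set c | 0 < pnum R a b c].

End Scheme.

From mathcomp Require Import all_boot.
Set Implicit Arguments. Unset Strict Implicit. Unset Printing Implicit Defensive.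

(* Counting the triples (u,v,w) with p_uv^w <> 0 by their pair (u,v) gives
   the sum of |R_u R_v| over all pairs, so it suffices that every complex
   product has one or two elements, and then to reindex by a |-> a'. For the upper bound fix x: every pair (y,w) with
   x R_u y and R_w in R_u R_v extends, by regularity, to some z with
   x R_w z and y R_v z, and different pairs give different (y,z). Hence
   k_u |R_u R_v| <= k_u k_v, i.e. |R_u R_v| <= k_v <= 2. *)

Lemma sum_pos_le2 (T : finType) (f : T -> nat) :
  (forall t, 0 < f t <= 2) -> \sum_t f t = #|T| + #|[set t | f t == 2]|.
Proof.
move=> f12; rewrite -sum1dep_card [X in _ + X]big_mkcond -sum1_card -big_split /=.
by apply: eq_bigr => t _; have := f12 t; case: (f t) => [|[|[|]]].
Qed.

Lemma card_pnum_neq0 (X : finType) (d : nat) (R : X -> X -> 'I_d.+1) :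
  #|[set t : 'I_d.+1 * 'I_d.+1 * 'I_d.+1 | pnum R t.1.1 t.1.2 t.2 != 0]|
  = \sum_(ab : 'I_d.+1 * 'I_d.+1) #|cprod R ab.1 ab.2|.
Proof.
rewrite -sum1dep_card.
rewrite (eq_bigr (fun ab => \sum_(c | pnum R ab.1 ab.2 c != 0) 1)) => [|ab _].
  by rewrite pair_big_dep.
by rewrite sum1dep_card; apply: eq_card => c; rewrite !inE lt0n.
Qed.

Section Scheme.
Variables (X : finType) (d : nat) (R : X -> X -> 'I_d.+1).
Hypothesis schemeR : is_scheme R.

Lemma pnumE i j k m n : R m n = k -> pnum R i j k = pcount R i j m n.
Proof.
case: schemeR => _ _ _ regR Rmn; rewrite /pnum.
case: pickP => [[m' n'] /= /eqP Rmn'|/(_ (m, n)) /=]; last by rewrite Rmn eqxx.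
exact: regR Rmn' Rmn.
Qed.

Lemma trP c x y : (R y x == tr R c) = (R x y == c).
Proof.
case: schemeR => _ _ trR _; rewrite /tr.
case: pickP => [c' /forallP /(_ x) /forallP /(_ y) /eqP //|no_tr].
by have [c' trc'] := trR c; move: (no_tr c'); rewrite trc'.
Qed.

Lemma trK : involutive (tr R).
Proof.
move=> c; case: schemeR => [nonempty _ _ _]; have [x [y Rxy]] := nonempty c.
have : R x y == tr R (tr R c) by rewrite !trP Rxy.
by rewrite Rxy => /eqP.
Qed.

Lemma valencyE c x : #|[set y | R x y == c]| = valency R c.
Proof.
case: schemeR => _ R0 _ _.
rewrite /valency (@pnumE _ _ _ x x); last by apply/eqP; rewrite R0.
by apply: eq_card => y; rewrite !inE trP andbb.
Qed.

Lemma valency_gt0 c : 0 < valency R c.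
Proof.
case: schemeR => [nonempty _ _ _]; have [x [y Rxy]] := nonempty c.
by rewrite -(valencyE c x); apply/card_gt0P; exists y; rewrite inE Rxy.
Qed.

Lemma mem_cprod u v x y z : R x y = u -> R y z = v -> R x z \in cprod R u v.
Proof.
move=> Rxy Ryz; rewrite inE (@pnumE _ _ _ x z) //.
by apply/card_gt0P; exists y; rewrite inE Rxy Ryz !eqxx.
Qed.

Lemma cprod_triangle u v w x y :
  w \in cprod R u v -> R x y = u -> exists z, (R x z == w) && (R y z == v).
Proof.
case: schemeR => [nonempty _ _ _]; have [x' [z' Rx'z']] := nonempty w.
rewrite inE (pnumE _ _ Rx'z') => /card_gt0P [y' /[!inE] /andP [/eqP Rx'y' Ry'z']] Rxy.
(* p_{w v'}^u is positive at (x',y'), hence also at (x,y) *)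
have : 0 < pcount R w (tr R v) x' y'.
  by apply/card_gt0P; exists z'; rewrite inE Rx'z' trP Ry'z' eqxx.
rewrite -(pnumE _ _ Rx'y') (pnumE _ _ Rxy) => /card_gt0P [z /[!inE] /andP [Rxz Rzy]].
by exists z; rewrite Rxz -trP.
Qed.

Lemma card_cprod_gt0 u v : 0 < #|cprod R u v|.
Proof.
case: schemeR => [nonempty _ _ _]; have [x [y Rxy]] := nonempty u.
have /card_gt0P [z /[!inE] /eqP Ryz] : 0 < #|[set z | R y z == v]|.
  by rewrite valencyE valency_gt0.
by apply/card_gt0P; exists (R x z); apply: mem_cprod Ryz.
Qed.

Lemma card_cprod_le_valency u v : #|cprod R u v| <= valency R v.
Proof.
case: schemeR => [nonempty _ _ _]; have [x _] := nonempty u.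
pose Y := [set y | R x y == u].
pose Q := [set yz : X * X | (R x yz.1 == u) && (R yz.1 yz.2 == v)].
pose lift yw : X * X := (yw.1, odflt x [pick z | (R x z == yw.2) && (R yw.1 z == v)]).
have liftP yw : yw \in setX Y (cprod R u v) ->
    (R x (lift yw).2 == yw.2) && (R yw.1 (lift yw).2 == v).
  case: yw => y w /setXP []; rewrite [y \in Y]inE => /eqP Rxy uv_w /=.
  by case: pickP => [z //|no_z]; have [z] := cprod_triangle uv_w Rxy; rewrite no_z.
have card_Q : #|Q| = valency R u * valency R v.
  rewrite -(valencyE u x) -sum_nat_const.
  rewrite (eq_bigr (fun y => \sum_(z | R y z == v) 1)) => [|y _]; last first.
    by rewrite sum1dep_card valencyE.
  by rewrite pair_big_dep sum1dep_card; apply: eq_card => yz; rewrite !inE.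
have inj_lift : {in setX Y (cprod R u v) &, injective lift}.
  move=> [y w] [y' w'] /liftP /andP [/eqP /= Rxz _] /liftP /andP [/eqP /= Rxz' _] [/= ey ez].
  by rewrite -Rxz -Rxz' ez ey.
rewrite -(leq_pmul2l (valency_gt0 u)) -card_Q -(valencyE u x) -cardsX.
rewrite -(card_in_imset inj_lift); apply/subset_leq_card/subsetP => _ /imsetP [yw Dyw ->].
have /andP [_ Ryz] := liftP yw Dyw; rewrite inE Ryz andbT.
by case: yw Dyw {Ryz} => y w /setXP [/[!inE]].
Qed.

Lemma card_tr_pairs (P : pred ('I_d.+1 * 'I_d.+1)) :
  #|[set ab | P (tr R ab.1, ab.2)]| = #|[set ab | P ab]|.
Proof.
have inj : injective (fun ab : 'I_d.+1 * 'I_d.+1 => (tr R ab.1, ab.2)).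
  by move=> [a b] [a' b'] [ea eb]; rewrite -(trK a) ea trK eb.
by rewrite -[RHS](card_preimset _ inj); apply: eq_card => ab; rewrite !inE.
Qed.

End Scheme.

Theorem lemma2p2 (X : finType) (d : nat) (R : X -> X -> 'I_d.+1) :
  is_scheme R -> quasi_thin R ->
  #|[set t : 'I_d.+1 * 'I_d.+1 * 'I_d.+1 | pnum R t.1.1 t.1.2 t.2 != 0]|
  = d.+1 ^ 2 + #|[set ab : 'I_d.+1 * 'I_d.+1 | #|cprod R (tr R ab.1) ab.2| == 2]|.
Proof.
move=> schemeR thinR.
rewrite card_pnum_neq0 sum_pos_le2; last first.
  move=> [a b]; rewrite card_cprod_gt0 //=.
  exact: leq_trans (card_cprod_le_valency schemeR a b) (thinR b).
rewrite card_prod card_ord mulnn.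
by rewrite (card_tr_pairs schemeR (fun ab => #|cprod R ab.1 ab.2| == 2)).
Qed.
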